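(* For $m \geq 3$, a fan-crossing free $m$-star has at most $3m-8$ arrows, and this bound is attained only for $m=3$ (for $m \geq 4$ there are at most $3m-9$ arrows).
   Context: An $m$-star is a regular $m$-gon $P$ together with a finite set of arrows. Label the vertices of $P$ counter-clockwise $v_1,\dots,v_m$ and let $e_i = v_iv_{i+1}$ (indices modulo $m$) be its boundary edges. An arrow is a ray segment starting at a vertex $v_i$ of $P$, pointing into the interior of $P$, and ending where it exits $P$ through (the relative interior of) a boundary edge $e_j$ not incident to $v_i$; several arrows may start at the same vertex. Two elements among the boundary edges and arrows intersect if they share a point other than a common endpoint vertex; in particular an arrow intersects the edge through which it exits. An element is incident to a vertex $v$ if $v$ is one of its endpoints (an arrow is incident only to its starting vertex). The $m$-star is ($2$-)fan-crossing free if no edge or arrow intersects two elements (arrows or edges) that are incident to the same vertex. *)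

From Stdlib Require Import Reals List Arith.
Import ListNotations.
Open Scope R_scope.

Definition point : Type := (R * R)%type.

(* Vertex v_k of the regular m-gon inscribed in the unit circle, labelled
   counter-clockwise (indices are taken modulo m: vtx m m = vtx m 0). *)
Definition vtx (m k : nat) : point :=
  (cos (2 * PI * INR k / INR m), sin (2 * PI * INR k / INR m)).

Definition lerp (a b : point) (s : R) : point :=
  ((1 - s) * fst a + s * fst b, (1 - s) * snd a + s * snd b).

Definition on_seg (a b q : point) : Prop :=
  exists s, 0 <= s <= 1 /\ q = lerp a b s.

(* An arrow: starts at vertex v_src, exits through (the relative interior of)
   edge e_edge = v_edge v_(edge+1) at the point with parameter par in (0,1). *)
Record arrow : Type := Arrow { a_src : nat; a_edge : nat; a_par : R }.

Definition valid_arrow (m : nat) (a : arrow) : Prop :=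
  (a_src a < m)%nat /\ (a_edge a < m)%nat /\
  a_src a <> a_edge a /\ a_src a <> Nat.modulo (S (a_edge a)) m /\
  0 < a_par a < 1.

Definition arrow_end (m : nat) (a : arrow) : point :=
  lerp (vtx m (a_edge a)) (vtx m (S (a_edge a))) (a_par a).

Definition is_star (m : nat) (A : list arrow) : Prop :=
  Forall (valid_arrow m) A /\ NoDup A.

Inductive elem : Type := EEdge (j : nat) | EArrow (a : arrow).

Definition elem_in (m : nat) (A : list arrow) (x : elem) : Prop :=
  match x with
  | EEdge j => (j < m)%nat
  | EArrow a => In a A
  end.

Definition on_elem (m : nat) (x : elem) (q : point) : Prop :=
  match x with
  | EEdge j => on_seg (vtx m j) (vtx m (S j)) q
  | EArrow a => on_seg (vtx m (a_src a)) (arrow_end m a) q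
  end.

Definition incident (m : nat) (x : elem) (k : nat) : Prop :=
  match x with
  | EEdge j => k = j \/ k = Nat.modulo (S j) m
  | EArrow a => k = a_src a
  end.

Definition intersects (m : nat) (x y : elem) : Prop :=
  exists q, on_elem m x q /\ on_elem m y q /\
    ~ (exists k, (k < m)%nat /\ incident m x k /\ incident m y k /\ q = vtx m k).

Definition fan_crossing_free (m : nat) (A : list arrow) : Prop :=
  forall (x y z : elem) (k : nat),
    elem_in m A x -> elem_in m A y -> elem_in m A z ->
    x <> y -> x <> z -> y <> z ->
    (k < m)%nat -> incident m y k -> incident m z k ->
    intersects m x y -> intersects m x z -> False.

From Stdlib Require Import Reals List Arith Lra Lia Bool Classical.
Import ListNotations.

(* We prove the stronger bound |A| <= 2m - 5.  The argument abstracts a star into a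
   "chord configuration": the 2m boundary positions (vertex v_i at 2i, edge e_i at 2i + 1)
   lie on a circle and every arrow becomes the chord from its starting vertex to its exit
   edge.  Fan-crossing freeness yields two rules: chords with adjacent endpoints do not cross,
   and no chord crosses two chords leaving the same vertex.
   1. Combinatorics ([chord_config_bound]): a configuration on 2k >= 6 positions has at most
      2k - 5 chords.  Relabel the circle so that (0, y) is a shortest chord; deleting the two
      positions following 0 and at most two chords leaves a configuration on 2k - 2 positions.
      On six positions only one chord fits.
   2. Geometry ([arrows_intersect], [star_config]): orientation determinants of points on the
      boundary of the regular m-gon show that arrows whose chords cross really intersect, so
      every fan-crossing free star yields a chord configuration.
   3. A single arrow in the triangle attains the bound; [lemma3] follows. *)

Open Scope nat_scope.

Lemma list_argmin {A : Type} (f : A -> nat) (P : A -> Prop) (l : list A) :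
  (exists a, In a l /\ P a) ->
  exists a, In a l /\ P a /\ forall b, In b l -> P b -> f a <= f b.
Proof.
  induction l as [|x l IH]; intros [z [Hz Pz]]; [destruct Hz|].
  destruct (classic (exists a, In a l /\ P a)) as [Hl|Hl].
  - destruct (IH Hl) as [a [Ha [Pa Hmin]]].
    destruct (classic (P x /\ f x < f a)) as [[Px Hlt]|Hx].
    + exists x. split; [left; reflexivity|]. split; [exact Px|].
      intros b [<-|Hb] Pb; [lia|]. specialize (Hmin b Hb Pb). lia.
    + exists a. split; [right; exact Ha|]. split; [exact Pa|].
      intros b [<-|Hb] Pb; [|auto].
      destruct (le_lt_dec (f a) (f x)); [assumption|]. exfalso; auto.
  - exists x. destruct Hz as [<-|Hz]; [|exfalso; eauto].
    split; [left; reflexivity|]. split; [exact Pz|].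
    intros b [<-|Hb] Pb; [lia|]. exfalso; eauto.
Qed.

Definition drop_two (a b : nat) (l : list nat) : list nat :=
  filter (fun z => negb (z =? a) && negb (z =? b)) l.

Lemma in_drop_two a b l z : In z (drop_two a b l) <-> In z l /\ z <> a /\ z <> b.
Proof.
  unfold drop_two. rewrite filter_In, andb_true_iff, !negb_true_iff, !Nat.eqb_neq. tauto.
Qed.

Lemma length_drop_two (l : list nat) a b : NoDup l -> In a l -> In b l -> a <> b ->
  length (drop_two a b l) + 2 = length l.
Proof.
  intros Hl Ha Hb Hab. unfold drop_two.
  rewrite <- (filter_length (fun z => negb (z =? a) && negb (z =? b)) l).
  f_equal. cbn beta.
  set (dropped := filter _ l).
  assert (Hd : forall z, In z dropped <-> In z l /\ (z = a \/ z = b)).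
  { intro z. unfold dropped.
    rewrite filter_In, negb_andb, !negb_involutive, orb_true_iff, !Nat.eqb_eq. tauto. }
  change 2 with (length [a; b]). apply Nat.le_antisymm; apply NoDup_incl_length.
  - constructor; [simpl; intuition|constructor; [simpl; tauto|constructor]].
  - intros z Hz. apply Hd. simpl in Hz. intuition congruence.
  - apply NoDup_filter, Hl.
  - intros z Hz. apply Hd in Hz. simpl. intuition congruence.
Qed.

Lemma length_filter_rejects_two {A : Type} (f : A -> bool) (l : list A) (c : A) : NoDup l ->
  (forall a b, In a l -> In b l -> f a = false -> f b = false -> a <> c -> b <> c -> a = b) ->
  length l <= length (filter f l) + 2.
Proof.
  intros Hl Huniq. rewrite <- (filter_length f l).
  enough (length (filter (fun x => negb (f x)) l) <= 2) by lia.
  assert (Hrej : forall x, In x (filter (fun x => negb (f x)) l) <-> In x l /\ f x = false).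
  { intro x. rewrite filter_In, negb_true_iff. tauto. }
  destruct (classic (exists d, In d l /\ f d = false /\ d <> c)) as [[d [Hd [Fd Ndc]]]|Hnone].
  - change 2 with (length [c; d]). apply NoDup_incl_length; [apply NoDup_filter, Hl|].
    intros x Hx. apply Hrej in Hx as [Hx Fx].
    destruct (classic (x = c)) as [->|Nxc]; [left; reflexivity|].
    right; left. apply Huniq; auto.
  - apply Nat.le_trans with (length [c]); [|simpl; lia].
    apply NoDup_incl_length; [apply NoDup_filter, Hl|].
    intros x Hx. apply Hrej in Hx as [Hx Fx]. left.
    apply NNPP. intro Nxc. apply Hnone. exists x. auto.
Qed.

(* Cyclic order on naturals: walking upwards around the circle from [a], one meets [b]
   strictly before [c]. *)
Definition cyc_between (a b c : nat) : Prop := (a < b < c) \/ (b < c < a) \/ (c < a < b).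

Definition cross (c d : nat * nat) : Prop :=
  (cyc_between (fst c) (fst d) (snd c) /\ cyc_between (snd c) (snd d) (fst c)) \/
  (cyc_between (fst c) (snd d) (snd c) /\ cyc_between (snd c) (fst d) (fst c)).

Ltac cyclic := unfold cross, cyc_between in *; simpl in *; lia.

Lemma cross_sym c d : cross c d -> cross d c.
Proof. destruct c, d. cyclic. Qed.

Definition cyc_betweenb (a b c : nat) : bool :=
  ((a <? b) && (b <? c)) || ((b <? c) && (c <? a)) || ((c <? a) && (a <? b)).

Definition crossb (c d : nat * nat) : bool :=
  (cyc_betweenb (fst c) (fst d) (snd c) && cyc_betweenb (snd c) (snd d) (fst c)) ||
  (cyc_betweenb (fst c) (snd d) (snd c) && cyc_betweenb (snd c) (fst d) (fst c)).

Lemma crossb_spec c d : crossb c d = true <-> cross c d.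
Proof.
  unfold crossb, cyc_betweenb, cross, cyc_between.
  rewrite !orb_true_iff, !andb_true_iff, !orb_true_iff, !andb_true_iff, !Nat.ltb_lt. tauto.
Qed.

Definition crosses_into (y : nat) (ch : list (nat * nat)) (c : nat * nat) : bool :=
  (fst c =? 0) && existsb (fun d => (snd d =? y) && crossb c d) ch.

Lemma crosses_into_spec y ch v t : crosses_into y ch (v, t) = true <->
  v = 0 /\ exists s, In (s, y) ch /\ cross (v, t) (s, y).
Proof.
  unfold crosses_into. cbn [fst]. rewrite andb_true_iff, Nat.eqb_eq, existsb_exists. split.
  - intros [-> [[s y'] [Hs Hp]]]. apply andb_true_iff in Hp as [Hp X]. cbn [snd] in Hp.
    apply Nat.eqb_eq in Hp. subst y'. apply crossb_spec in X. eauto.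
  - intros [-> [s [Hs X]]]. split; [reflexivity|]. exists (s, y). split; [exact Hs|].
    cbn [snd]. rewrite Nat.eqb_refl. apply crossb_spec, X.
Qed.

Definition adjacent (al : list nat) (a b : nat) : Prop :=
  a <> b /\
  ((forall z, In z al -> ~ cyc_between a z b) \/ (forall z, In z al -> ~ cyc_between b z a)).

Lemma adjacent_sym al a b : adjacent al a b -> adjacent al b a.
Proof. intros [Hab [H|H]]; split; auto. Qed.

Lemma not_adjacent al a b : a <> b -> ~ adjacent al a b ->
  (exists z, In z al /\ cyc_between a z b) /\ (exists z, In z al /\ cyc_between b z a).
Proof.
  intros Hab H. split; apply NNPP; intro Hn; apply H; split; auto.
  - left. intros z Hz Hb. apply Hn; eauto.
  - right. intros z Hz Hb. apply Hn; eauto.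
Qed.

(* The combinatorial skeleton of a fan-crossing free star.  Positions [al] lie on a circle and
   are coloured alternately: [true] for polygon vertices, [false] for polygon edges. *)
Record chord_config (al : list nat) (col : nat -> bool) (ch : list (nat * nat)) : Prop := {
  cfg_nodup : NoDup al;
  cfg_alternating : forall a b, In a al -> In b al -> adjacent al a b -> col a <> col b;
  cfg_chord : forall v e, In (v, e) ch ->
    In v al /\ In e al /\ col v = true /\ col e = false /\ ~ adjacent al v e;
  cfg_chords_nodup : NoDup ch;
  cfg_adjacent_no_cross : forall c d a b, In c ch -> In d ch ->
    (a = fst c \/ a = snd c) -> (b = fst d \/ b = snd d) -> adjacent al a b -> ~ cross c d;
  cfg_fan_free : forall c d1 d2, In c ch -> In d1 ch -> In d2 ch -> d1 <> d2 ->
    fst d1 = fst d2 -> cross c d1 -> cross c d2 -> False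
}.

Arguments cfg_nodup {al col ch}.
Arguments cfg_alternating {al col ch}.
Arguments cfg_chord {al col ch}.
Arguments cfg_chords_nodup {al col ch}.
Arguments cfg_adjacent_no_cross {al col ch}.
Arguments cfg_fan_free {al col ch}.

(* Relabelling the positions [0 .. K-1] of a circle: rotate [x] to [0], keeping the orientation
   when [d] is true and reversing it otherwise.  [relabel_inv] undoes it. *)
Definition relabel (K x : nat) (d : bool) (z : nat) : nat :=
  if d then (if x <=? z then z - x else z + K - x)
  else (if z <=? x then x - z else x + K - z).

Definition relabel_inv (K x : nat) (d : bool) (w : nat) : nat :=
  if d then (if w + x <? K then w + x else w + x - K) else relabel K x false w.

Definition relabel_chord K x d (c : nat * nat) : nat * nat :=
  (relabel K x d (fst c), relabel K x d (snd c)).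

Ltac relabel_cases := repeat match goal with
  | |- context [?a <=? ?b] => destruct (Nat.leb_spec a b)
  | |- context [?a <? ?b] => destruct (Nat.ltb_spec a b)
  end.

Section Relabel.
Variables (K x : nat) (d : bool).
Hypothesis HxK : x < K.

Lemma relabel_invK z : z < K -> relabel_inv K x d (relabel K x d z) = z.
Proof. intros; unfold relabel_inv, relabel; destruct d; relabel_cases; lia. Qed.

Lemma relabel_inj a b : a < K -> b < K -> relabel K x d a = relabel K x d b -> a = b.
Proof.
  intros Ha Hb E. rewrite <- (relabel_invK a Ha), <- (relabel_invK b Hb), E. reflexivity.
Qed.

Lemma relabel_between a b c : a < K -> b < K -> c < K ->
  ((if d then cyc_between a b c else cyc_between c b a) <->
   cyc_between (relabel K x d a) (relabel K x d b) (relabel K x d c)).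
Proof. intros. unfold relabel. destruct d; relabel_cases; unfold cyc_between; lia. Qed.

Lemma relabel_dist a b : a < K -> b < K ->
  relabel K a d b = (if relabel K x d a <=? relabel K x d b
                     then relabel K x d b - relabel K x d a
                     else relabel K x d b + K - relabel K x d a).
Proof. intros. unfold relabel. destruct d; relabel_cases; lia. Qed.

Lemma relabel_cross p q r s : p < K -> q < K -> r < K -> s < K ->
  (cross (p, q) (r, s) <-> cross (relabel_chord K x d (p, q)) (relabel_chord K x d (r, s))).
Proof.
  intros. unfold relabel_chord, cross; simpl. rewrite <- !relabel_between by assumption.
  destruct d; tauto.
Qed.

Lemma relabel_adjacent al a b : (forall z, In z al -> z < K) -> a < K -> b < K ->
  (adjacent (map (relabel K x d) al) (relabel K x d a) (relabel K x d b) <-> adjacent al a b).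
Proof.
  intros Hal Ha Hb.
  assert (Harc : forall u v, u < K -> v < K ->
    ((forall z', In z' (map (relabel K x d) al) ->
        ~ cyc_between (relabel K x d u) z' (relabel K x d v)) <->
     (forall z, In z al -> ~ (if d then cyc_between u z v else cyc_between v z u)))).
  { intros u v Hu Hv. split.
    - intros H z Hz Hbt. apply (H (relabel K x d z)); [apply in_map; exact Hz|].
      apply relabel_between; auto.
    - intros H z' Hz' Hbt. apply in_map_iff in Hz' as [z [<- Hz]].
      apply (H z Hz). apply relabel_between; auto. }
  unfold adjacent. rewrite !Harc by assumption.
  assert (Hneq : relabel K x d a <> relabel K x d b <-> a <> b).
  { split; intros H1 H2; apply H1; [subst; reflexivity|]. apply relabel_inj; auto. }
  rewrite Hneq. destruct d; tauto.
Qed.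

End Relabel.

Lemma relabel_self K x d : relabel K x d x = 0.
Proof. unfold relabel; destruct d; relabel_cases; lia. Qed.

Lemma relabel_flip K a b d : relabel K a (negb d) b = relabel K b d a.
Proof. unfold relabel; destruct d; simpl; relabel_cases; lia. Qed.

Lemma config_relabel al col ch K x d : chord_config al col ch ->
  (forall z, In z al -> z < K) -> x < K ->
  chord_config (map (relabel K x d) al) (fun w => col (relabel_inv K x d w))
               (map (relabel_chord K x d) ch).
Proof.
  intros Hcfg Hal Hx.
  assert (Hch : forall v e, In (v, e) ch -> v < K /\ e < K).
  { intros v e H. destruct (cfg_chord Hcfg v e H) as [Hv [He _]]. auto. }
  constructor.
  - apply NoDup_map_NoDup_ForallPairs; [|apply (cfg_nodup Hcfg)].
    intros a b Ha Hb. apply relabel_inj; auto.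
  - intros a' b' Ha' Hb' Hadj.
    apply in_map_iff in Ha' as [a [<- Ha]]. apply in_map_iff in Hb' as [b [<- Hb]].
    rewrite !relabel_invK by auto. apply (cfg_alternating Hcfg); auto.
    apply (relabel_adjacent K x d); auto.
  - intros v' e' Hin. apply in_map_iff in Hin as [[v e] [Heq Hin]].
    injection Heq as <- <-. destruct (Hch v e Hin).
    destruct (cfg_chord Hcfg v e Hin) as [Hv [He [Cv [Ce Hna]]]].
    rewrite !relabel_invK, relabel_adjacent by auto.
    repeat split; auto; apply in_map; auto.
  - apply NoDup_map_NoDup_ForallPairs; [|apply (cfg_chords_nodup Hcfg)].
    intros [p q] [r s] Hc Hd Heq. injection Heq as E1 E2.
    destruct (Hch p q Hc), (Hch r s Hd). f_equal; apply (relabel_inj K x d); auto.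
  - intros c' d' a' b' Hc' Hd' Ha' Hb' Hadj.
    apply in_map_iff in Hc' as [[p q] [<- Hc]]. apply in_map_iff in Hd' as [[r s] [<- Hd]].
    destruct (Hch p q Hc), (Hch r s Hd).
    rewrite <- relabel_cross by auto. simpl in Ha', Hb'.
    destruct Ha' as [->| ->]; destruct Hb' as [->| ->];
      rewrite relabel_adjacent in Hadj by auto;
      refine (cfg_adjacent_no_cross Hcfg (p, q) (r, s) _ _ Hc Hd _ _ Hadj); simpl; auto.
  - intros c' d1' d2' Hc' Hd1' Hd2' Hne Hfst Hx1 Hx2.
    apply in_map_iff in Hc' as [[p q] [<- Hc]].
    apply in_map_iff in Hd1' as [[r s] [<- Hd1]]. apply in_map_iff in Hd2' as [[t u] [<- Hd2]].
    destruct (Hch p q Hc), (Hch r s Hd1), (Hch t u Hd2).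
    rewrite <- relabel_cross in Hx1, Hx2 by auto. simpl in Hfst.
    apply (cfg_fan_free Hcfg (p, q) (r, s) (t, u)); auto.
    + intro E; apply Hne; rewrite E; reflexivity.
    + apply (relabel_inj K x d); auto.
Qed.

Definition shortest_at (ch : list (nat * nat)) (y : nat) : Prop :=
  forall v e, In (v, e) ch -> (v, e) <> (0, y) -> y < v \/ y < e.

(* Choose a chord and an orientation minimising the cyclic length of the chord; rotating this
   chord to [(0, y)] makes it a shortest one. *)
Lemma shortest_chord al col ch K : chord_config al col ch -> ch <> [] ->
  (forall z, In z al -> z < K) ->
  exists x y d, In (x, y) ch /\ shortest_at (map (relabel_chord K x d) ch) (relabel K x d y).
Proof.
  intros Hcfg Hne Hal.
  set (L := flat_map (fun c => [(c, true); (c, false)]) ch).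
  assert (HL : forall c b, In c ch -> In (c, b) L).
  { intros c b Hc. apply in_flat_map. exists c. split; [exact Hc|]. destruct b; simpl; auto. }
  destruct (list_argmin (fun p => relabel K (fst (fst p)) (snd p) (snd (fst p))) (fun _ => True) L)
    as [[[x y] d] [Hin [_ Hmin]]].
  { destruct ch as [|c ch']; [congruence|]. exists (c, true). split; [left; reflexivity|trivial]. }
  apply in_flat_map in Hin as [c [Hc Hcin]].
  assert (Hxy : In (x, y) ch).
  { simpl in Hcin. destruct Hcin as [E|[E|[]]]; injection E; intros; subst; exact Hc. }
  exists x, y, d. split; [exact Hxy|].
  intros v' e' Hin' Hne'. apply in_map_iff in Hin' as [[v e] [Heq Hve]]. injection Heq as <- <-.
  destruct (cfg_chord Hcfg x y Hxy) as [Hx [Hy [Cx _]]].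
  destruct (cfg_chord Hcfg v e Hve) as [Hv [He [_ [Ce _]]]].
  pose proof (Hal x Hx) as HxK. pose proof (Hal y Hy). pose proof (Hal v Hv). pose proof (Hal e He).
  pose proof (relabel_self K x d).
  apply NNPP; intro Hfar.
  destruct (le_lt_dec (relabel K x d v) (relabel K x d e)).
  - (* [(v, e)] read in orientation [d] would be at most as long as [(x, y)]: it is [(x, y)] *)
    pose proof (Hmin ((v, e), d) (HL _ _ Hve) I) as Hm. simpl in Hm.
    rewrite (relabel_dist K x d HxK v e) in Hm by auto.
    destruct (Nat.leb_spec (relabel K x d v) (relabel K x d e)); [|lia].
    assert (v = x) by (apply (relabel_inj K x d); auto; lia). subst v.
    assert (e = y) by (apply (relabel_inj K x d); auto; lia). subst e.
    apply Hne'. unfold relabel_chord. simpl. congruence.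
  - (* read in the other orientation, [(v, e)] would force the edge [e] onto the vertex [x] *)
    pose proof (Hmin ((v, e), negb d) (HL _ _ Hve) I) as Hm. simpl in Hm.
    rewrite relabel_flip, (relabel_dist K x d HxK e v) in Hm by auto.
    destruct (Nat.leb_spec (relabel K x d e) (relabel K x d v)); [|lia].
    assert (e = x) by (apply (relabel_inj K x d); auto; lia). congruence.
Qed.

Lemma below_list_max (al : list nat) z : In z al -> z < S (list_max al).
Proof.
  intro Hz. pose proof (proj1 (list_max_le al (list_max al)) (le_n _)) as Hle.
  rewrite Forall_forall in Hle. specialize (Hle z Hz). lia.
Qed.

Lemma normalize al col ch : chord_config al col ch -> ch <> [] ->
  exists al' col' ch' y, chord_config al' col' ch' /\ length al' = length al /\
    length ch' = length ch /\ In (0, y) ch' /\ shortest_at ch' y.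
Proof.
  intros Hcfg Hne. set (K := S (list_max al)).
  destruct (shortest_chord al col ch K Hcfg Hne (below_list_max al)) as [x [y [d [Hxy Hshort]]]].
  destruct (cfg_chord Hcfg x y Hxy) as [Hx _].
  exists (map (relabel K x d) al), (fun w => col (relabel_inv K x d w)),
         (map (relabel_chord K x d) ch), (relabel K x d y).
  split; [exact (config_relabel al col ch K x d Hcfg (below_list_max al) (below_list_max al x Hx))
         |].
  rewrite !length_map.
  split; [reflexivity|]. split; [reflexivity|]. split; [|exact Hshort].
  rewrite <- (relabel_self K x d).
  change (relabel K x d x, relabel K x d y) with (relabel_chord K x d (x, y)).
  apply in_map, Hxy.
Qed.

Lemma next_position al col ch a y : chord_config al col ch -> In a al ->
  (exists z, In z al /\ a < z < y) ->
  exists n, In n al /\ a < n < y /\ (forall w, In w al -> ~ a < w < n) /\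
    adjacent al a n /\ col n = negb (col a).
Proof.
  intros Hcfg Ha Hex.
  destruct (list_argmin (fun z => z) (fun z => a < z < y) al Hex) as [n [Hn [Pn Hmin]]].
  assert (Hgap : forall w, In w al -> ~ a < w < n).
  { intros w Hw Hb. specialize (Hmin w Hw). lia. }
  assert (Hadj : adjacent al a n).
  { split; [lia|]. left. intros w Hw Hb. apply (Hgap w Hw). cyclic. }
  exists n. split; [exact Hn|]. split; [exact Pn|]. split; [exact Hgap|]. split; [exact Hadj|].
  pose proof (cfg_alternating Hcfg a n Ha Hn Hadj).
  destruct (col a), (col n); simpl; congruence.
Qed.

Lemma same_colour_gap al col ch a b : chord_config al col ch -> In a al -> In b al -> a < b ->
  col a = col b -> exists z, In z al /\ a < z < b.
Proof.
  intros Hcfg Ha Hb Hab Hcol. apply NNPP; intro Hn.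
  apply (cfg_alternating Hcfg a b Ha Hb); [|exact Hcol].
  split; [lia|]. left. intros z Hz Hbt. apply Hn. exists z. split; [exact Hz|]. cyclic.
Qed.

Definition chord_eq_dec (c d : nat * nat) : {c = d} + {c <> d}.
Proof. decide equality; apply Nat.eq_dec. Defined.

Section Reduction.
Variables (al : list nat) (col : nat -> bool) (ch : list (nat * nat)) (y : nat).
Hypotheses (Hcfg : chord_config al col ch) (Hy0 : In (0, y) ch) (Hshort : shortest_at ch y).

Lemma chord0 : In 0 al /\ In y al /\ col 0 = true /\ col y = false /\ 0 < y /\ ~ adjacent al 0 y.
Proof.
  destruct (cfg_chord Hcfg 0 y Hy0) as [H0 [Hy [C0 [Cy Hna]]]].
  repeat split; auto. destruct y; [congruence|lia].
Qed.

Lemma chord0_crossing t s : In (0, t) ch -> (0, t) <> (0, y) -> In (s, y) ch ->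
  cross (0, t) (s, y) -> y < t < s.
Proof.
  intros Ht Nt Hs X.
  assert (Ns : (s, y) <> (0, y)) by (intro E; injection E as ->; cyclic).
  destruct (Hshort 0 t Ht Nt) as [?|Lt]; [lia|].
  destruct (Hshort s y Hs Ns) as [Ls|?]; [|lia].
  cyclic.
Qed.

Lemma first_two_positions : exists n1 n2, In n1 al /\ In n2 al /\ 0 < n1 < n2 /\ n2 < y /\
  col n1 = false /\ col n2 = true /\ adjacent al 0 n1 /\
  (forall w, In w al -> ~ 0 < w < n1) /\ (forall w, In w al -> ~ n1 < w < n2).
Proof.
  destruct chord0 as [H0 [Hy [C0 [Cy [Ly Hna]]]]].
  destruct (not_adjacent al 0 y) as [[z [Hz Hbz]] _]; [lia|exact Hna|].
  destruct (next_position al col ch 0 y Hcfg H0) as [n1 [Hn1 [L1 [G1 [A1 C1]]]]].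
  { exists z. split; [exact Hz|]. cyclic. }
  rewrite C0 in C1. simpl in C1.
  destruct (next_position al col ch n1 y Hcfg Hn1) as [n2 [Hn2 [L2 [G2 [_ C2]]]]].
  { apply (same_colour_gap al col ch); auto; [lia|congruence]. }
  rewrite C1 in C2. simpl in C2.
  exists n1, n2. repeat (split; [eassumption || lia|]). exact G2.
Qed.

Section FirstTwo.
Variables n1 n2 : nat.
Hypotheses (Hn1 : In n1 al) (Hn2 : In n2 al) (Hord : 0 < n1 < n2 /\ n2 < y)
  (C1 : col n1 = false) (C2 : col n2 = true) (Hadj1 : adjacent al 0 n1)
  (G1 : forall w, In w al -> ~ 0 < w < n1) (G2 : forall w, In w al -> ~ n1 < w < n2).

(* No chord ends at [n1]: it would cross [(0, y)], whose endpoint [0] is adjacent to [n1]. *)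
Lemma n1_untouched v e : In (v, e) ch -> v <> n1 /\ e <> n1.
Proof.
  intro Hin. destruct (cfg_chord Hcfg v e Hin) as [_ [_ [Cv [Ce _]]]].
  split; [intros ->; congruence|]. intros ->.
  destruct (Hshort v n1 Hin) as [Hv|Hv]; [intro E; injection E; lia| |lia].
  apply (cfg_adjacent_no_cross Hcfg (0, y) (v, n1) 0 n1 Hy0 Hin); simpl; auto. cyclic.
Qed.

(* A chord from [n2] leaves the arc [0, y], so it crosses [(0, y)]. *)
Lemma n2_chord e : In (n2, e) ch -> y < e /\ cross (0, y) (n2, e).
Proof.
  intro Hin. destruct (Hshort n2 e Hin) as [H|H]; [intro E; injection E; lia|lia|].
  split; [exact H|]. cyclic.
Qed.

(* Hence, by fan-crossing freeness, at most one chord leaves [n2]. *)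
Lemma n2_chord_unique e1 e2 : In (n2, e1) ch -> In (n2, e2) ch -> e1 = e2.
Proof.
  intros H1 H2. apply NNPP; intro Hne.
  apply (cfg_fan_free Hcfg (0, y) (n2, e1) (n2, e2)); auto.
  - intro E; injection E; auto.
  - apply n2_chord, H1.
  - apply n2_chord, H2.
Qed.

Section Seam.
Variable n3 : nat.
Hypotheses (Hn3 : In n3 al) (L3 : n2 < n3) (G3 : forall w, In w al -> ~ n2 < w < n3).

Lemma drop_adjacent a b : In a (drop_two n1 n2 al) -> In b (drop_two n1 n2 al) ->
  adjacent (drop_two n1 n2 al) a b ->
  adjacent al a b \/ (a = 0 /\ b = n3) \/ (a = n3 /\ b = 0).
Proof.
  intros Ha Hb Hadj.
  destruct chord0 as [H0 _].
  assert (Hrest : forall w, In w al -> w <> n1 -> w <> n2 -> w = 0 \/ n3 <= w).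
  { intros w Hw N1 N2. specialize (G1 w Hw). specialize (G2 w Hw). specialize (G3 w Hw). lia. }
  assert (Hkept : forall w, In w al -> ~ (w = n1 \/ w = n2) -> In w (drop_two n1 n2 al)).
  { intros w Hw Hn. apply in_drop_two. tauto. }
  assert (Hend : forall w, In w (drop_two n1 n2 al) -> w = 0 \/ n3 <= w).
  { intros w Hw. apply in_drop_two in Hw as [Hw [N1 N2]]. exact (Hrest w Hw N1 N2). }
  pose proof (Hend a Ha). pose proof (Hend b Hb).
  assert (H0' : In 0 (drop_two n1 n2 al)) by (apply Hkept; [exact H0|lia]).
  assert (H3' : In n3 (drop_two n1 n2 al)) by (apply Hkept; [exact Hn3|lia]).
  destruct (classic (adjacent al a b)) as [A|NA]; [left; exact A|right].
  destruct Hadj as [Hab [P|P]];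
    destruct (not_adjacent al a b Hab NA) as [[z1 [Hz1 B1]] [z2 [Hz2 B2]]].
  - assert (Z : z1 = n1 \/ z1 = n2) by (apply NNPP; intro Hz; exact (P z1 (Hkept z1 Hz1 Hz) B1)).
    pose proof (P 0 H0'). pose proof (P n3 H3'). cyclic.
  - assert (Z : z2 = n1 \/ z2 = n2) by (apply NNPP; intro Hz; exact (P z2 (Hkept z2 Hz2 Hz) B2)).
    pose proof (P 0 H0'). pose proof (P n3 H3'). cyclic.
Qed.

Hypothesis C3 : col n3 = false.
Variable f : nat * nat -> bool.
Hypothesis Hf : forall v e, In (v, e) ch -> f (v, e) = true -> v <> n2 /\ (v, e) <> (0, n3).

Lemma kept_endpoints v e : In (v, e) (filter f ch) ->
  In v (drop_two n1 n2 al) /\ In e (drop_two n1 n2 al).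
Proof.
  intro Hin. apply filter_In in Hin as [Hin Hfv].
  destruct (cfg_chord Hcfg v e Hin) as [Hv [He [Cv [Ce _]]]].
  destruct (n1_untouched v e Hin). destruct (Hf v e Hin Hfv).
  split; apply in_drop_two; repeat split; auto; intros ->; congruence.
Qed.

(* What remains is a configuration, provided no surviving chord from [0] crosses a surviving
   chord ending at [n3] (the positions [0] and [n3] have become adjacent). *)
Lemma reduce_config :
  (forall t s, In (0, t) ch -> In (s, n3) ch -> f (0, t) = true -> f (s, n3) = true ->
     ~ cross (0, t) (s, n3)) ->
  chord_config (drop_two n1 n2 al) col (filter f ch).
Proof.
  intros Hseam. destruct chord0 as [_ [_ [C0 _]]].
  constructor.
  - apply NoDup_filter, (cfg_nodup Hcfg).
  - intros a b Ha Hb Hab.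
    destruct (drop_adjacent a b Ha Hb Hab) as [A|[[-> ->]|[-> ->]]]; [|congruence|congruence].
    apply in_drop_two in Ha, Hb. apply (cfg_alternating Hcfg); tauto.
  - intros v e Hin. destruct (kept_endpoints v e Hin) as [Hv He].
    apply filter_In in Hin as [Hin Hfv].
    destruct (cfg_chord Hcfg v e Hin) as [_ [_ [Cv [Ce Hna]]]].
    repeat split; auto. intro Hadj.
    destruct (drop_adjacent v e Hv He Hadj) as [A|[[-> ->]|[-> ->]]]; [tauto| |congruence].
    destruct (Hf 0 n3 Hin Hfv); tauto.
  - apply NoDup_filter, (cfg_chords_nodup Hcfg).
  - intros [v1 e1] [v2 e2] a b Hc Hd Ha Hb Hadj. simpl in Ha, Hb.
    destruct (kept_endpoints v1 e1 Hc), (kept_endpoints v2 e2 Hd).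
    assert (Ha' : In a (drop_two n1 n2 al)) by (destruct Ha as [->| ->]; assumption).
    assert (Hb' : In b (drop_two n1 n2 al)) by (destruct Hb as [->| ->]; assumption).
    apply filter_In in Hc as [Hc Fc], Hd as [Hd Fd].
    destruct (cfg_chord Hcfg v1 e1 Hc) as [_ [_ [Cv1 [Ce1 _]]]].
    destruct (cfg_chord Hcfg v2 e2 Hd) as [_ [_ [Cv2 [Ce2 _]]]].
    destruct (drop_adjacent a b Ha' Hb' Hadj) as [A|[[-> ->]|[-> ->]]].
    + exact (cfg_adjacent_no_cross Hcfg _ _ a b Hc Hd Ha Hb A).
    + destruct Ha as [<-|<-]; [|congruence]. destruct Hb as [<-|<-]; [congruence|].
      apply Hseam; auto.
    + destruct Hb as [<-|<-]; [|congruence]. destruct Ha as [<-|<-]; [congruence|].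
      intro X. apply cross_sym in X. revert X. apply Hseam; auto.
  - intros c d1 d2 Hc Hd1 Hd2.
    apply filter_In in Hc as [Hc _], Hd1 as [Hd1 _], Hd2 as [Hd2 _].
    exact (cfg_fan_free Hcfg c d1 d2 Hc Hd1 Hd2).
Qed.

End Seam.

(* If some position lies strictly between [n2] and [y], the first one [n3] becomes adjacent to
   [0]; delete [(0, y)] and the (at most one) chord leaving [n2]. *)
Lemma reduce_inner : (exists z, In z al /\ n2 < z < y) ->
  exists ch', chord_config (drop_two n1 n2 al) col ch' /\ length ch <= length ch' + 2.
Proof.
  intros Hex.
  destruct (next_position al col ch n2 y Hcfg Hn2 Hex) as [n3 [Hn3 [L3 [G3 [_ C3]]]]].
  rewrite C2 in C3. simpl in C3.
  set (f := fun c : nat * nat => if chord_eq_dec c (0, y) then false else negb (fst c =? n2)).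
  assert (Hf : forall v e, f (v, e) = true <-> (v, e) <> (0, y) /\ v <> n2).
  { intros v e. unfold f. destruct (chord_eq_dec (v, e) (0, y)); simpl.
    - split; [discriminate|tauto].
    - rewrite negb_true_iff, Nat.eqb_neq. tauto. }
  exists (filter f ch). split.
  - apply (reduce_config n3 Hn3 ltac:(lia) G3 C3 f).
    + intros v e Hin Hfv. apply Hf in Hfv as [Nc Nv]. split; [exact Nv|].
      intro E. injection E as -> ->. destruct (Hshort 0 n3 Hin Nc); lia.
    + intros t s Ht Hs Ft _ X. apply Hf in Ft as [Nt _].
      assert (Ns : (s, n3) <> (0, y)) by (intro E; injection E; lia).
      destruct (Hshort s n3 Hs Ns) as [Ls|Ls]; [|lia].
      (* [(s, n3)] would cross both [(0, y)] and [(0, t)] *)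
      apply (cfg_fan_free Hcfg (s, n3) (0, y) (0, t) Hs Hy0 Ht); auto.
      * cyclic.
      * apply cross_sym, X.
  - apply (length_filter_rejects_two f ch (0, y) (cfg_chords_nodup Hcfg)).
    (* the rejected chords other than [(0, y)] leave [n2], and there is at most one *)
    assert (Hrej : forall v e, f (v, e) = false -> (v, e) <> (0, y) -> v = n2).
    { intros v e F N. apply NNPP; intro Nv. rewrite <- not_true_iff_false in F. apply F, Hf. auto. }
    intros [a1 a2] [b1 b2] Ha Hb Fa Fb Na Nb.
    pose proof (Hrej a1 a2 Fa Na). pose proof (Hrej b1 b2 Fb Nb). subst.
    f_equal. apply n2_chord_unique; assumption.
Qed.

(* If [n2] immediately precedes [y], no chord leaves [n2]: it would cross [(0, y)], whose
   endpoint [y] is adjacent to [n2]. *)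
Lemma n2_silent : (forall w, In w al -> ~ n2 < w < y) -> forall v e, In (v, e) ch -> v <> n2.
Proof.
  intros G3 v e Hin ->. destruct (n2_chord e Hin) as [_ X].
  apply (cfg_adjacent_no_cross Hcfg (0, y) (n2, e) y n2 Hy0 Hin); simpl; auto.
  split; [lia|]. right. intros z Hz Hb. apply (G3 z Hz). cyclic.
Qed.

(* If [n2] immediately precedes [y], then [0] becomes adjacent to [y]; delete [(0, y)] and the
   (at most one) chord from [0] crossing a chord that ends at [y]. *)
Lemma reduce_outer : (forall w, In w al -> ~ n2 < w < y) ->
  exists ch', chord_config (drop_two n1 n2 al) col ch' /\ length ch <= length ch' + 2.
Proof.
  intros G3. destruct chord0 as [_ [Hy [_ [Cy [Ly _]]]]].
  set (f := fun c : nat * nat =>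
    if chord_eq_dec c (0, y) then false else negb (crosses_into y ch c)).
  assert (Hf : forall v t, f (v, t) = false -> (v, t) <> (0, y) ->
    v = 0 /\ exists s, In (s, y) ch /\ cross (v, t) (s, y)).
  { intros v t Fc Nc. unfold f in Fc. destruct (chord_eq_dec (v, t) (0, y)); [contradiction|].
    apply negb_false_iff, crosses_into_spec in Fc. exact Fc. }
  exists (filter f ch). split.
  - apply (reduce_config y Hy ltac:(lia) G3 Cy f).
    + intros v e Hin Hfv. split; [exact (n2_silent G3 v e Hin)|].
      unfold f in Hfv. destruct (chord_eq_dec (v, e) (0, y)); [discriminate|assumption].
    + intros t s Ht Hs Ft _ X. unfold f in Ft.
      destruct (chord_eq_dec (0, t) (0, y)); [discriminate|].
      apply negb_true_iff in Ft. rewrite <- not_true_iff_false, crosses_into_spec in Ft.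
      exact (Ft (conj eq_refl (ex_intro _ s (conj Hs X)))).
  - (* the rejected chords other than [(0, y)] leave [0]; two of them, [(0, t1)] and [(0, t2)]
       with [t1 < t2], would both be crossed by the chord [(s2, y)] crossing [(0, t2)] *)
    apply (length_filter_rejects_two f ch (0, y) (cfg_chords_nodup Hcfg)).
    intros [v1 t1] [v2 t2] H1 H2 F1 F2 N1 N2.
    destruct (Hf v1 t1 F1 N1) as [-> [s1 [Hs1 X1]]], (Hf v2 t2 F2 N2) as [-> [s2 [Hs2 X2]]].
    pose proof (chord0_crossing t1 s1 H1 N1 Hs1 X1).
    pose proof (chord0_crossing t2 s2 H2 N2 Hs2 X2).
    destruct (lt_eq_lt_dec t1 t2) as [[Lt|Eq]|Lt]; [exfalso|subst; reflexivity|exfalso].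
    + apply (cfg_fan_free Hcfg (s2, y) (0, t1) (0, t2) Hs2 H1 H2);
        [intro E; injection E; lia|reflexivity|cyclic|cyclic].
    + apply (cfg_fan_free Hcfg (s1, y) (0, t1) (0, t2) Hs1 H1 H2);
        [intro E; injection E; lia|reflexivity|cyclic|cyclic].
Qed.

Lemma six_positions : length al = 6 -> exists k1 k2, y < k1 < k2 /\ In k1 al /\ In k2 al /\
  col k1 = true /\ col k2 = false /\
  forall w, In w al -> w = 0 \/ w = n1 \/ w = n2 \/ w = y \/ w = k1 \/ w = k2.
Proof.
  intros Hlen. destruct chord0 as [H0 [Hy [C0 [Cy [Ly Hna]]]]].
  destruct (not_adjacent al 0 y) as [_ [z [Hz Hbz]]]; [lia|exact Hna|].
  destruct (next_position al col ch y (S (list_max al)) Hcfg Hy) as [k1 [Hk1 [Lk1 [_ [_ Ck1]]]]].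
  { exists z. split; [exact Hz|]. split; [cyclic|apply below_list_max, Hz]. }
  rewrite Cy in Ck1. simpl in Ck1.
  destruct (next_position al col ch k1 (S (list_max al)) Hcfg Hk1) as [k2 [Hk2 [Lk2 [_ [_ Ck2]]]]].
  { (* otherwise [k1] would be adjacent to the vertex [0] *)
    apply NNPP; intro Hn. apply (cfg_alternating Hcfg k1 0 Hk1 H0); [|congruence].
    split; [lia|]. left. intros w Hw Hb. apply Hn. exists w. split; [exact Hw|].
    split; [cyclic|apply below_list_max, Hw]. }
  rewrite Ck1 in Ck2. simpl in Ck2.
  exists k1, k2. split; [lia|]. do 4 (split; [assumption|]).
  intros w Hw. apply NNPP; intro Hn.
  assert (Hsub : incl [w; 0; n1; n2; y; k1; k2] al).
  { intros u Hu. simpl in Hu. intuition congruence. }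
  assert (Hnd : NoDup [w; 0; n1; n2; y; k1; k2]) by (repeat constructor; simpl; intuition lia).
  pose proof (NoDup_incl_length Hnd Hsub). simpl in *. lia.
Qed.

(* With six positions, [(0, y)] is the only chord: any other chord would join adjacent
   positions. *)
Lemma base_six : length al = 6 -> length ch <= 1.
Proof.
  intros Hlen. destruct chord0 as [H0 [Hy [C0 [Cy [Ly Hna]]]]].
  destruct (six_positions Hlen) as [k1 [k2 [Lk [Hk1 [Hk2 [Ck1 [Ck2 Hall]]]]]]].
  assert (G3 : forall w, In w al -> ~ n2 < w < y).
  { intros w Hw Hb. destruct (Hall w Hw) as [->|[->|[->|[->|[->| ->]]]]]; lia. }
  change 1 with (length [(0, y)]).
  apply NoDup_incl_length; [apply (cfg_chords_nodup Hcfg)|].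
  intros [v e] Hin. left.
  destruct (cfg_chord Hcfg v e Hin) as [Hv [He [Cv [Ce Hnadj]]]].
  destruct (n1_untouched v e Hin) as [Nv Ne]. pose proof (n2_silent G3 v e Hin) as Nv2.
  destruct (Hall v Hv) as [->|[->|[->|[->|[->| ->]]]]]; try congruence;
  destruct (Hall e He) as [->|[->|[->|[->|[->| ->]]]]]; try congruence;
  exfalso; apply Hnadj; (split; [lia|]);
  solve [ left; intros w Hw Hb; destruct (Hall w Hw) as [->|[->|[->|[->|[->| ->]]]]]; cyclic
        | right; intros w Hw Hb; destruct (Hall w Hw) as [->|[->|[->|[->|[->| ->]]]]]; cyclic ].
Qed.

End FirstTwo.

Lemma reduction_step : exists al' ch', chord_config al' col ch' /\
  length al' + 2 = length al /\ length ch <= length ch' + 2.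
Proof.
  destruct first_two_positions as [n1 [n2 [Hn1 [Hn2 [L12 [L2 [C1 [C2 [A1 [G1 G2]]]]]]]]]].
  assert (Hord : 0 < n1 < n2 /\ n2 < y) by lia.
  assert (Hstep : exists ch',
    chord_config (drop_two n1 n2 al) col ch' /\ length ch <= length ch' + 2).
  { destruct (classic (exists z, In z al /\ n2 < z < y)) as [Hex|Hnone].
    - apply (reduce_inner n1 n2); assumption.
    - apply (reduce_outer n1 n2); try assumption. intros w Hw Hb. apply Hnone. eauto. }
  destruct Hstep as [ch' [Hcfg' Hlen]].
  exists (drop_two n1 n2 al), ch'. split; [exact Hcfg'|]. split; [|exact Hlen].
  apply length_drop_two; [apply (cfg_nodup Hcfg)|assumption|assumption|lia].
Qed.

Lemma base_case : length al = 6 -> length ch <= 1.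
Proof.
  destruct first_two_positions as [n1 [n2 [Hn1 [Hn2 [L12 [L2 [C1 [C2 [A1 [G1 G2]]]]]]]]]].
  intros Hlen. assert (Hord : 0 < n1 < n2 /\ n2 < y) by lia.
  apply (base_six n1 n2); assumption.
Qed.

End Reduction.

Theorem chord_config_bound k al col ch : chord_config al col ch -> length al = 2 * k -> 3 <= k ->
  length ch + 5 <= 2 * k.
Proof.
  revert al col ch. induction k as [|k IH]; intros al col ch Hcfg Hlen Hk; [lia|].
  destruct ch as [|c ch0]; [simpl; lia|].
  destruct (normalize al col (c :: ch0) Hcfg ltac:(discriminate))
    as [al' [col' [ch' [y [Hcfg' [Ha [Hc [Hy Hs]]]]]]]].
  rewrite <- Hc.
  destruct (Nat.eq_dec k 2) as [->|Hk2].
  - pose proof (base_case al' col' ch' y Hcfg' Hy Hs ltac:(lia)). lia.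
  - destruct (reduction_step al' col' ch' y Hcfg' Hy Hs) as [al2 [ch2 [Hcfg2 [L2 C2]]]].
    specialize (IH al2 col' ch2 Hcfg2 ltac:(lia) ltac:(lia)). lia.
Qed.

Open Scope R_scope.

Definition orient (P Q R0 : point) : R :=
  (fst Q - fst P) * (snd R0 - snd P) - (snd Q - snd P) * (fst R0 - fst P).

Lemma orient_cyc P Q R0 : orient P Q R0 = orient Q R0 P.
Proof. destruct P, Q, R0; unfold orient; simpl; ring. Qed.

Lemma orient_swap P Q R0 : orient P Q R0 = - orient P R0 Q.
Proof. destruct P, Q, R0; unfold orient; simpl; ring. Qed.

Lemma orient_lerp_r P Q A B t : orient P Q (lerp A B t) = (1 - t) * orient P Q A + t * orient P Q B.
Proof. destruct P, Q, A, B; unfold orient, lerp; simpl; ring. Qed.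

Lemma orient_degenerate_l P Q : orient P Q P = 0.
Proof. destruct P, Q; unfold orient; simpl; ring. Qed.

Lemma orient_degenerate_r P Q : orient P Q Q = 0.
Proof. destruct P, Q; unfold orient; simpl; ring. Qed.

Lemma on_seg_orient P Q q : on_seg P Q q -> orient P Q q = 0.
Proof.
  intros [s [_ ->]]. rewrite orient_lerp_r, orient_degenerate_l, orient_degenerate_r. ring.
Qed.

Lemma lerp0 P Q : lerp P Q 0 = P.
Proof. destruct P, Q; unfold lerp; simpl; f_equal; ring. Qed.

Lemma lerp1 P Q : lerp P Q 1 = Q.
Proof. destruct P, Q; unfold lerp; simpl; f_equal; ring. Qed.

Lemma orient_circle t u w :
  orient (cos t, sin t) (cos (t + 2*u), sin (t + 2*u)) (cos (t + 2*u + 2*w), sin (t + 2*u + 2*w))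
  = 4 * sin u * sin w * sin (u + w).
Proof.
  assert (E1 : sin (2*w) = sin (t+2*u+2*w) * cos (t+2*u) - cos (t+2*u+2*w) * sin (t+2*u)).
  { rewrite <- sin_minus. f_equal. ring. }
  assert (E2 : sin (2*u) = sin (t+2*u) * cos t - cos (t+2*u) * sin t).
  { rewrite <- sin_minus. f_equal. ring. }
  assert (E3 : sin (2*u+2*w) = sin (t+2*u+2*w) * cos t - cos (t+2*u+2*w) * sin t).
  { rewrite <- sin_minus. f_equal. ring. }
  transitivity (sin (2*w) + sin (2*u) - sin (2*u + 2*w)).
  - rewrite E1, E2, E3. unfold orient; simpl. ring.
  - rewrite sin_plus, !sin_2a, !cos_2a_sin, sin_plus. ring.
Qed.

Definition vorient (m a b c : nat) : R := orient (vtx m a) (vtx m b) (vtx m c).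

Lemma vorient_val m a b c : (0 < m)%nat -> (a <= b)%nat -> (b <= c)%nat ->
  vorient m a b c = 4 * sin (PI * INR (b - a) / INR m) * sin (PI * INR (c - b) / INR m)
                      * sin (PI * INR (c - a) / INR m).
Proof.
  intros Hm Hab Hbc.
  assert (Hm' : 0 < INR m) by (apply lt_0_INR; exact Hm).
  set (t := 2 * PI * INR a / INR m).
  set (u := PI * INR (b - a) / INR m).
  set (w := PI * INR (c - b) / INR m).
  assert (Eb : 2 * PI * INR b / INR m = t + 2 * u).
  { unfold t, u. rewrite minus_INR by exact Hab. field. lra. }
  assert (Ec : 2 * PI * INR c / INR m = t + 2 * u + 2 * w).
  { unfold t, u, w. rewrite !minus_INR by assumption. field. lra. }
  assert (Euw : PI * INR (c - a) / INR m = u + w).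
  { unfold u, w. rewrite !minus_INR by lia. field. lra. }
  unfold vorient, vtx. rewrite Eb, Ec, Euw. fold t. apply orient_circle.
Qed.

Lemma angle_bounds k m : (0 < m)%nat -> (k <= m)%nat -> 0 <= PI * INR k / INR m <= PI.
Proof.
  intros Hm Hk. assert (Hm' : 0 < INR m) by (apply lt_0_INR; exact Hm).
  pose proof (le_INR _ _ Hk). pose proof (pos_INR k). pose proof PI_RGT_0.
  split.
  - unfold Rdiv. apply Rmult_le_pos; [apply Rmult_le_pos; lra|].
    left; apply Rinv_0_lt_compat; exact Hm'.
  - apply Rmult_le_reg_r with (INR m); [exact Hm'|].
    unfold Rdiv. rewrite Rmult_assoc, Rinv_l by lra. nra.
Qed.

Lemma angle_bounds_strict k m : (0 < k)%nat -> (k < m)%nat -> 0 < PI * INR k / INR m < PI.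
Proof.
  intros H0 Hk. assert (Hm' : 0 < INR m) by (apply lt_0_INR; lia).
  pose proof (lt_INR _ _ Hk). pose proof (lt_0_INR k H0). pose proof PI_RGT_0.
  split.
  - apply Rdiv_lt_0_compat; [apply Rmult_lt_0_compat|]; lra.
  - apply Rmult_lt_reg_r with (INR m); [exact Hm'|].
    unfold Rdiv. rewrite Rmult_assoc, Rinv_l by lra. nra.
Qed.

Lemma vorient_nonneg m a b c : (0 < m)%nat -> (a <= b)%nat -> (b <= c)%nat -> (c <= a + m)%nat ->
  0 <= vorient m a b c.
Proof.
  intros. rewrite vorient_val by assumption.
  destruct (angle_bounds (b - a) m) as [A1 A2]; [assumption|lia|].
  destruct (angle_bounds (c - b) m) as [B1 B2]; [assumption|lia|].
  destruct (angle_bounds (c - a) m) as [C1 C2]; [assumption|lia|].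
  pose proof (sin_ge_0 _ A1 A2). pose proof (sin_ge_0 _ B1 B2). pose proof (sin_ge_0 _ C1 C2).
  repeat apply Rmult_le_pos; lra.
Qed.

Lemma vorient_pos m a b c : (a < b)%nat -> (b < c)%nat -> (c < a + m)%nat -> 0 < vorient m a b c.
Proof.
  intros. rewrite vorient_val by lia.
  destruct (angle_bounds_strict (b - a) m) as [A1 A2]; try lia.
  destruct (angle_bounds_strict (c - b) m) as [B1 B2]; try lia.
  destruct (angle_bounds_strict (c - a) m) as [C1 C2]; try lia.
  pose proof (sin_gt_0 _ A1 A2). pose proof (sin_gt_0 _ B1 B2). pose proof (sin_gt_0 _ C1 C2).
  repeat apply Rmult_lt_0_compat; lra.
Qed.

Lemma orient_expand (A B C D E F : point) s t u :
  orient (lerp A B s) (lerp C D t) (lerp E F u) =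
    (1-s)*(1-t)*(1-u)*orient A C E + (1-s)*(1-t)*u*orient A C F
  + (1-s)*t*(1-u)*orient A D E + (1-s)*t*u*orient A D F
  + s*(1-t)*(1-u)*orient B C E + s*(1-t)*u*orient B C F
  + s*t*(1-u)*orient B D E + s*t*u*orient B D F.
Proof. destruct A, B, C, D, E, F. unfold orient, lerp; simpl. ring. Qed.

Lemma weighted_vorient_nonneg m w a b c : (0 < m)%nat -> 0 <= w ->
  w = 0 \/ (a <= b <= c /\ c <= a + m)%nat -> 0 <= w * vorient m a b c.
Proof.
  intros Hm Hw [->|Ho]; [lra|]. apply Rmult_le_pos; [lra|apply vorient_nonneg; lia].
Qed.

Lemma weighted_vorient_pos m w a b c : 0 < w -> (a < b < c /\ c < a + m)%nat ->
  0 < w * vorient m a b c.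
Proof. intros. apply Rmult_lt_0_compat; [lra|apply vorient_pos; lia]. Qed.

Ltac positive_term := apply weighted_vorient_pos; [repeat apply Rmult_lt_0_compat; lra|lia].

Definition bdry (m i : nat) (s : R) : point := lerp (vtx m i) (vtx m (S i)) s.

(* The orientation expands into eight vertex orientations with
   nonnegative weights; all are nonnegative and one is positive. *)
Lemma bdry_orient_pos m i1 i2 i3 s1 s2 s3 : (3 <= m)%nat -> (i3 < m)%nat ->
  0 <= s1 < 1 -> 0 <= s2 < 1 -> 0 <= s3 < 1 -> (i1 <= i2)%nat -> (i2 <= i3)%nat ->
  (i1 = i2 -> s1 = 0 /\ 0 < s2) -> (i2 = i3 -> s2 = 0 /\ 0 < s3) ->
  ~ (i1 = i2 /\ i3 = S i1 /\ s3 = 0) -> ~ (i2 = i3 /\ i1 = 0%nat /\ s1 = 0 /\ S i2 = m) ->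
  0 < orient (bdry m i1 s1) (bdry m i2 s2) (bdry m i3 s3).
Proof.
  intros Hm H3 S1 S2 S3 L12 L23 E12 E23 ND1 ND2.
  unfold bdry. rewrite orient_expand.
  fold (vorient m i1 i2 i3) (vorient m i1 i2 (S i3)) (vorient m i1 (S i2) i3)
    (vorient m i1 (S i2) (S i3)) (vorient m (S i1) i2 i3) (vorient m (S i1) i2 (S i3))
    (vorient m (S i1) (S i2) i3) (vorient m (S i1) (S i2) (S i3)).
  assert (Z1 : s1 = 0 \/ (i1 < i2)%nat)
    by (destruct (Nat.eq_dec i1 i2); [left; apply E12|right]; lia).
  assert (Z2 : s2 = 0 \/ (i2 < i3)%nat)
    by (destruct (Nat.eq_dec i2 i3); [left; apply E23|right]; lia).
  (* each of the eight terms is nonnegative: a term whose vertices may be out of order carries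
     a factor [s1] or [s2] that vanishes in that case *)
  repeat match goal with
  | |- context [?w * vorient m ?a ?b ?c] =>
      assert_fails (assert (0 <= w * vorient m a b c) by assumption);
      assert (0 <= w * vorient m a b c)
        by (apply weighted_vorient_nonneg;
            [lia
            |repeat apply Rmult_le_pos; lra
            |destruct Z1 as [->|]; destruct Z2 as [->|]; first [right; lia|left; ring]])
  end.
  destruct (Nat.eq_dec i1 i2) as [E1|E1]; [destruct (E12 E1) as [Hs1 Hs2]|];
    (destruct (Nat.eq_dec i2 i3) as [E2|E2]; [destruct (E23 E2) as [Hs2' Hs3]|]); try lra.
  -
    destruct (Nat.eq_dec i3 (S i1)) as [E3|E3].
    + assert (0 < s3) by (destruct (Rle_lt_or_eq_dec 0 s3 (proj1 S3)); [assumption|exfalso; auto]).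
      enough (0 < (1-s1)*s2*s3 * vorient m i1 (S i2) (S i3)) by lra. positive_term.
    + enough (0 < (1-s1)*s2*(1-s3) * vorient m i1 (S i2) i3) by lra. positive_term.
  -
    destruct (Nat.eq_dec i1 0) as [Z|Z]; [destruct (Nat.eq_dec (S i2) m) as [Z'|Z']|].
    + assert (0 < s1) by (destruct (Rle_lt_or_eq_dec 0 s1 (proj1 S1)); [assumption|exfalso; auto]).
      enough (0 < s1*(1-s2)*s3 * vorient m (S i1) i2 (S i3)) by lra. positive_term.
    + enough (0 < (1-s1)*(1-s2)*s3 * vorient m i1 i2 (S i3)) by lra. positive_term.
    + enough (0 < (1-s1)*(1-s2)*s3 * vorient m i1 i2 (S i3)) by lra. positive_term.
  -
    enough (0 < (1-s1)*(1-s2)*(1-s3) * vorient m i1 i2 i3) by lra. positive_term.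
Qed.

(* Counter-clockwise, boundary points are ordered by [bnode]: [v_i] comes at
   [2i] and the points of [e_i] at [2i + 1]. *)
Inductive bpt : Type := BV (v : nat) | BE (e : nat) (s : R).

Definition bpoint (m : nat) (p : bpt) : point :=
  match p with BV v => vtx m v | BE e s => lerp (vtx m e) (vtx m (S e)) s end.
Definition bnode (p : bpt) : nat :=
  match p with BV v => (2 * v)%nat | BE e _ => (2 * e + 1)%nat end.
Definition bidx (p : bpt) : nat := match p with BV v => v | BE e _ => e end.
Definition bpar (p : bpt) : R := match p with BV _ => 0 | BE _ s => s end.
Definition bwf (m : nat) (p : bpt) : Prop :=
  match p with BV v => (v < m)%nat | BE e s => (e < m)%nat /\ 0 < s < 1 end.

(* A vertex and a point of an edge not incident to it: the segment joining them passes
   through the interior of the polygon. *)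
Definition spans_interior (m : nat) (p q : bpt) : Prop :=
  match p, q with
  | BV v, BE e _ | BE e _, BV v => v <> e /\ v <> Nat.modulo (S e) m
  | _, _ => False
  end.

Lemma spans_interior_sym m p q : spans_interior m p q -> spans_interior m q p.
Proof. destruct p, q; simpl; auto. Qed.

Lemma bpoint_bdry m p : bpoint m p = bdry m (bidx p) (bpar p).
Proof. destruct p; simpl; unfold bdry; [rewrite lerp0|]; reflexivity. Qed.

Lemma bwf_bounds m p : bwf m p -> (bidx p < m)%nat /\ 0 <= bpar p < 1.
Proof.
  destruct p as [v|e s]; simpl; intro W; [split; [exact W|lra]|].
  destruct W; split; [assumption|lra].
Qed.

Lemma bnode_order m X Y : bwf m X -> bwf m Y -> (bnode X < bnode Y)%nat ->
  (bidx X <= bidx Y)%nat /\ (bidx X = bidx Y -> bpar X = 0 /\ 0 < bpar Y).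
Proof.
  destruct X as [v|e s], Y as [v'|e' s']; simpl; intros H1 H2 H3; split; try lia; intros; try lia.
  split; [reflexivity|]. destruct H2; lra.
Qed.

Lemma sorted_orient_pos m X Y Z : (3 <= m)%nat -> bwf m X -> bwf m Y -> bwf m Z ->
  (bnode X < bnode Y)%nat -> (bnode Y < bnode Z)%nat ->
  spans_interior m X Y \/ spans_interior m Y Z \/ spans_interior m X Z ->
  0 < orient (bpoint m X) (bpoint m Y) (bpoint m Z).
Proof.
  intros Hm WX WY WZ NXY NYZ Hsp.
  destruct (bnode_order m X Y WX WY NXY) as [L12 E12].
  destruct (bnode_order m Y Z WY WZ NYZ) as [L23 E23].
  destruct (bwf_bounds m X WX) as [I1 S1], (bwf_bounds m Y WY) as [I2 S2].
  destruct (bwf_bounds m Z WZ) as [I3 S3].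
  rewrite !bpoint_bdry. apply bdry_orient_pos; auto.
  - intros [A [B C]]. destruct X as [v1|e1 s1], Y as [v2|e2 s2], Z as [v3|e3 s3]; simpl in *;
      try lia; try (destruct WZ; lra).
    destruct Hsp as [[P1 P2]|[[P1 P2]|[]]]; [lia|]. rewrite Nat.mod_small in P2 by lia. lia.
  - intros [A [B [C D]]]. destruct X as [v1|e1 s1], Y as [v2|e2 s2], Z as [v3|e3 s3]; simpl in *;
      try lia; try (destruct WX; lra).
    destruct Hsp as [[]|[[P1 P2]|[P1 P2]]]; [lia|].
    subst. rewrite Nat.Div0.mod_same in P2. lia.
Qed.

Lemma bpoint_orient_pos m X Y Z : (3 <= m)%nat -> bwf m X -> bwf m Y -> bwf m Z ->
  cyc_between (bnode X) (bnode Y) (bnode Z) -> spans_interior m X Z ->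
  0 < orient (bpoint m X) (bpoint m Y) (bpoint m Z).
Proof.
  intros Hm WX WY WZ [B|[B|B]] Hsp.
  - apply sorted_orient_pos; auto; lia.
  - rewrite orient_cyc. apply sorted_orient_pos; auto; try lia.
    right; left; apply spans_interior_sym, Hsp.
  - rewrite orient_cyc, orient_cyc. apply sorted_orient_pos; auto; try lia.
    left; apply spans_interior_sym, Hsp.
Qed.

Lemma opposite_sides m X1 X2 Y1 Y2 : (3 <= m)%nat ->
  bwf m X1 -> bwf m X2 -> bwf m Y1 -> bwf m Y2 -> spans_interior m X1 X2 ->
  cross (bnode X1, bnode X2) (bnode Y1, bnode Y2) ->
  orient (bpoint m X1) (bpoint m X2) (bpoint m Y1) *
  orient (bpoint m X1) (bpoint m X2) (bpoint m Y2) < 0.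
Proof.
  intros Hm W1 W2 W3 W4 Hsp X. pose proof (spans_interior_sym _ _ _ Hsp) as Hsp'.
  unfold cross in X; simpl in X. destruct X as [[H1 H2]|[H1 H2]].
  - pose proof (bpoint_orient_pos m X1 Y1 X2 Hm W1 W3 W2 H1 Hsp).
    pose proof (bpoint_orient_pos m X2 Y2 X1 Hm W2 W4 W1 H2 Hsp').
    rewrite (orient_swap (bpoint m X1) (bpoint m X2) (bpoint m Y1)),
      (orient_cyc (bpoint m X1) (bpoint m X2) (bpoint m Y2)). nra.
  - pose proof (bpoint_orient_pos m X1 Y2 X2 Hm W1 W4 W2 H1 Hsp).
    pose proof (bpoint_orient_pos m X2 Y1 X1 Hm W2 W3 W1 H2 Hsp').
    rewrite (orient_swap (bpoint m X1) (bpoint m X2) (bpoint m Y2)),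
      (orient_cyc (bpoint m X1) (bpoint m X2) (bpoint m Y1)). nra.
Qed.

Lemma sign_change_ratio o1 o2 : o1 * o2 < 0 -> o1 - o2 <> 0 /\ 0 <= o1 / (o1 - o2) <= 1.
Proof.
  intros H. destruct (Rlt_or_le 0 o1) as [Ho1|Ho1].
  - assert (o2 < 0) by nra. split; [lra|].
    split; [left; apply Rdiv_lt_0_compat; lra|].
    apply Rmult_le_reg_r with (o1 - o2); [lra|].
    unfold Rdiv. rewrite Rmult_assoc, Rinv_l by lra. lra.
  - assert (o1 < 0) by (destruct Ho1 as [|E]; [assumption|rewrite E in H; lra]).
    assert (0 < o2) by nra.
    replace (o1 / (o1 - o2)) with ((- o1) / (o2 - o1)) by (field; lra).
    split; [lra|]. split; [left; apply Rdiv_lt_0_compat; lra|].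
    apply Rmult_le_reg_r with (o2 - o1); [lra|].
    unfold Rdiv. rewrite Rmult_assoc, Rinv_l by lra. lra.
Qed.

Lemma segments_meet P1 P2 Q1 Q2 :
  orient P1 P2 Q1 * orient P1 P2 Q2 < 0 -> orient Q1 Q2 P1 * orient Q1 Q2 P2 < 0 ->
  exists q, on_seg P1 P2 q /\ on_seg Q1 Q2 q.
Proof.
  intros H1 H2.
  destruct (sign_change_ratio _ _ H1) as [D1 F1], (sign_change_ratio _ _ H2) as [D2 F2].
  exists (lerp Q1 Q2 (orient P1 P2 Q1 / (orient P1 P2 Q1 - orient P1 P2 Q2))).
  split; [|eexists; split; [exact F1|reflexivity]].
  exists (orient Q1 Q2 P1 / (orient Q1 Q2 P1 - orient Q1 Q2 P2)). split; [exact F2|].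
  destruct P1 as [a b], P2 as [c d], Q1 as [e f], Q2 as [g h].
  revert D1 D2. unfold lerp, orient; simpl. intros D1 D2. f_equal; field; auto.
Qed.

Definition arrow_chord (a : arrow) : nat * nat := ((2 * a_src a)%nat, (2 * a_edge a + 1)%nat).

Lemma arrows_intersect m a b : (3 <= m)%nat -> valid_arrow m a -> valid_arrow m b ->
  cross (arrow_chord a) (arrow_chord b) -> intersects m (EArrow a) (EArrow b).
Proof.
  intros Hm [A1 [A2 [A3 [A4 A5]]]] [B1 [B2 [B3 [B4 B5]]]] X.
  set (X1 := BV (a_src a)). set (X2 := BE (a_edge a) (a_par a)).
  set (Y1 := BV (a_src b)). set (Y2 := BE (a_edge b) (a_par b)).
  assert (W1 : bwf m X1) by exact A1. assert (W2 : bwf m X2) by (split; assumption).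
  assert (W3 : bwf m Y1) by exact B1. assert (W4 : bwf m Y2) by (split; assumption).
  assert (PX : spans_interior m X1 X2) by (split; assumption).
  assert (PY : spans_interior m Y1 Y2) by (split; assumption).
  assert (Hne : a_src a <> a_src b).
  { intro E. unfold arrow_chord in X. rewrite E in X. cyclic. }
  destruct (segments_meet (bpoint m X1) (bpoint m X2) (bpoint m Y1) (bpoint m Y2)) as [q [Q1 Q2]].
  - exact (opposite_sides m X1 X2 Y1 Y2 Hm W1 W2 W3 W4 PX X).
  - exact (opposite_sides m Y1 Y2 X1 X2 Hm W3 W4 W1 W2 PY (cross_sym _ _ X)).
  - (* the arrows are incident only to their distinct starting vertices *)
    exists q. split; [exact Q1|]. split; [exact Q2|].
    intros [k [_ [I1 [I2 _]]]]. simpl in I1, I2. congruence.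
Qed.

Close Scope R_scope.

Lemma even_double k : Nat.even (2 * k) = true.
Proof. rewrite Nat.even_mul. reflexivity. Qed.

Lemma even_double_succ k : Nat.even (2 * k + 1) = false.
Proof. rewrite Nat.add_comm, Nat.even_add_mul_2. reflexivity. Qed.

Lemma seq_adjacent m a b : 1 <= m -> a < 2 * m -> b < 2 * m -> adjacent (seq 0 (2 * m)) a b ->
  b = S a \/ a = S b \/ (a = 0 /\ b = 2 * m - 1) \/ (b = 0 /\ a = 2 * m - 1).
Proof.
  intros Hm Ha Hb [Hab [P|P]].
  - assert (Q : forall z, z < 2 * m -> ~ cyc_between a z b) by (intros z Hz; apply P, in_seq; lia).
    pose proof (Q 0 ltac:(lia)).
    destruct (lt_dec (S a) (2 * m)) as [h|h]; [pose proof (Q (S a) h)|];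
      unfold cyc_between in *; lia.
  - assert (Q : forall z, z < 2 * m -> ~ cyc_between b z a) by (intros z Hz; apply P, in_seq; lia).
    pose proof (Q 0 ltac:(lia)).
    destruct (lt_dec (S b) (2 * m)) as [h|h]; [pose proof (Q (S b) h)|];
      unfold cyc_between in *; lia.
Qed.

Lemma seq_alternating m a b : 1 <= m -> In a (seq 0 (2 * m)) -> In b (seq 0 (2 * m)) ->
  adjacent (seq 0 (2 * m)) a b -> Nat.even a <> Nat.even b.
Proof.
  intros Hm Ha Hb Hadj. apply in_seq in Ha, Hb.
  assert (Hlast : Nat.even (2 * m - 1) = false).
  { replace (2 * m - 1) with (2 * (m - 1) + 1) by lia. apply even_double_succ. }
  destruct (seq_adjacent m a b Hm ltac:(lia) ltac:(lia) Hadj) as [->|[->|[[-> ->]|[-> ->]]]];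
    rewrite ?Nat.even_succ, ?Hlast, <- ?Nat.negb_even; simpl;
    [destruct (Nat.even a)|destruct (Nat.even b)| |]; discriminate.
Qed.

Lemma vertex_edge_adjacent m v e : v < m -> e < m ->
  adjacent (seq 0 (2 * m)) (2 * v) (2 * e + 1) -> v = e \/ v = Nat.modulo (S e) m.
Proof.
  intros Hv He Hadj.
  destruct (seq_adjacent m (2 * v) (2 * e + 1) ltac:(lia) ltac:(lia) ltac:(lia) Hadj)
    as [E|[E|[[E1 E2]|[E1 E2]]]]; [left; lia|right|right|lia].
  - rewrite Nat.mod_small; lia.
  - replace (S e) with m by lia. rewrite Nat.Div0.mod_same. lia.
Qed.

Lemma intersects_sym m x y : intersects m x y -> intersects m y x.
Proof.
  intros [q [H1 [H2 H3]]]. exists q. split; [exact H2|]. split; [exact H1|].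
  intros [k [Hk [I1 [I2 E]]]]. apply H3. exists k. auto.
Qed.

Lemma arrow_meets_exit_edge m a : valid_arrow m a -> intersects m (EEdge (a_edge a)) (EArrow a).
Proof.
  intros [A1 [A2 [A3 [A4 A5]]]]. exists (arrow_end m a). split; [|split].
  - exists (a_par a). split; [lra|reflexivity].
  - exists 1%R. split; [lra|]. rewrite lerp1. reflexivity.
  - intros [k [_ [I1 [I2 _]]]]. simpl in I1, I2. subst k. destruct I1; auto.
Qed.

Section StarConfig.
Variables (m : nat) (A : list arrow).
Hypotheses (Hm : 3 <= m) (Hstar : is_star m A) (Hfcf : fan_crossing_free m A).

Lemma star_valid_arrow a : In a A -> valid_arrow m a.
Proof. intro Ha. destruct Hstar as [HF _]. rewrite Forall_forall in HF. exact (HF a Ha). Qed.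

Lemma in_star_chords c : In c (map arrow_chord A) -> exists a, In a A /\ c = arrow_chord a.
Proof. intro Hc. apply in_map_iff in Hc as [a [<- Ha]]. eauto. Qed.

(* Two arrows from the same vertex through the same edge would both meet that edge. *)
Lemma star_chords_nodup : NoDup (map arrow_chord A).
Proof.
  apply NoDup_map_NoDup_ForallPairs; [|exact (proj2 Hstar)].
  intros a b Ha Hb Heq. apply NNPP; intro Hne. unfold arrow_chord in Heq. injection Heq as Es Ee.
  pose proof (star_valid_arrow a Ha) as Va. pose proof (star_valid_arrow b Hb) as Vb.
  refine (Hfcf (EEdge (a_edge a)) (EArrow a) (EArrow b) (a_src a) _ _ _ _ _ _ _ _ _ _ _);
    simpl; try discriminate.
  - apply Va.
  - exact Ha.
  - exact Hb.
  - intro E; injection E; exact Hne.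
  - apply Va.
  - reflexivity.
  - lia.
  - apply arrow_meets_exit_edge, Va.
  - replace (a_edge a) with (a_edge b) by lia. apply arrow_meets_exit_edge, Vb.
Qed.

(* An arrow [p] meeting an arrow [q] that leaves an endpoint of [p]'s exit edge would meet two
   elements incident to that endpoint. *)
Lemma exit_edge_fan p q : In p A -> In q A -> p <> q -> intersects m (EArrow p) (EArrow q) ->
  a_src q = a_edge p \/ a_src q = Nat.modulo (S (a_edge p)) m -> False.
Proof.
  intros Hp Hq Hpq I Hend. pose proof (star_valid_arrow p Hp) as Vp.
  pose proof (star_valid_arrow q Hq) as Vq.
  refine (Hfcf (EArrow p) (EEdge (a_edge p)) (EArrow q) (a_src q) _ _ _ _ _ _ _ _ _ _ _);
    simpl; try discriminate.
  - exact Hp.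
  - apply Vp.
  - exact Hq.
  - intro E; injection E; exact Hpq.
  - apply Vq.
  - exact Hend.
  - reflexivity.
  - apply intersects_sym, arrow_meets_exit_edge, Vp.
  - exact I.
Qed.

(* Adjacent positions are a vertex [v] and an edge [e] incident to it; if the chord from [v]
   crossed the chord through [e], the arrow exiting through [e] would meet both [e] and the
   arrow leaving [v]. *)
Lemma star_adjacent_no_cross c d a0 b0 :
  In c (map arrow_chord A) -> In d (map arrow_chord A) ->
  (a0 = fst c \/ a0 = snd c) -> (b0 = fst d \/ b0 = snd d) ->
  adjacent (seq 0 (2 * m)) a0 b0 -> ~ cross c d.
Proof.
  intros Hc Hd Ha0 Hb0 Hadj X.
  destruct (in_star_chords c Hc) as [a [Ha ->]], (in_star_chords d Hd) as [b [Hb ->]].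
  assert (Hab : a <> b) by (intros ->; cyclic).
  pose proof (star_valid_arrow a Ha) as Va. pose proof (star_valid_arrow b Hb) as Vb.
  pose proof (arrows_intersect m a b Hm Va Vb X) as Iab.
  pose proof (arrows_intersect m b a Hm Vb Va (cross_sym _ _ X)) as Iba.
  destruct Va as [A1 [A2 _]], Vb as [B1 [B2 _]].
  assert (Hpar : Nat.even a0 <> Nat.even b0).
  { apply (seq_alternating m); [lia| | |exact Hadj]; apply in_seq; simpl in *; lia. }
  cbn [fst snd arrow_chord] in Ha0, Hb0. destruct Ha0 as [->| ->], Hb0 as [->| ->];
    rewrite ?even_double, ?even_double_succ in Hpar; try congruence.
  - apply (exit_edge_fan b a Hb Ha (not_eq_sym Hab) Iba). apply vertex_edge_adjacent; assumption.
  - apply (exit_edge_fan a b Ha Hb Hab Iab).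
    apply vertex_edge_adjacent; [assumption|assumption|apply adjacent_sym, Hadj].
Qed.

(* A chord crossing two chords from the same vertex: its arrow meets two arrows sharing their
   starting vertex. *)
Lemma star_fan_free c d1 d2 :
  In c (map arrow_chord A) -> In d1 (map arrow_chord A) -> In d2 (map arrow_chord A) ->
  d1 <> d2 -> fst d1 = fst d2 -> cross c d1 -> cross c d2 -> False.
Proof.
  intros Hc Hd1 Hd2 Hne Hfst X1 X2.
  destruct (in_star_chords c Hc) as [a [Ha ->]].
  destruct (in_star_chords d1 Hd1) as [b1 [Hb1 ->]], (in_star_chords d2 Hd2) as [b2 [Hb2 ->]].
  unfold arrow_chord in Hfst. simpl in Hfst.
  refine (Hfcf (EArrow a) (EArrow b1) (EArrow b2) (a_src b1) _ _ _ _ _ _ _ _ _ _ _); simpl.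
  - exact Ha.
  - exact Hb1.
  - exact Hb2.
  - intro E; injection E as ->. cyclic.
  - intro E; injection E as ->. cyclic.
  - intro E; injection E as ->. auto.
  - apply (star_valid_arrow b1 Hb1).
  - reflexivity.
  - lia.
  - apply arrows_intersect; auto using star_valid_arrow.
  - apply arrows_intersect; auto using star_valid_arrow.
Qed.

Lemma star_config : chord_config (seq 0 (2 * m)) Nat.even (map arrow_chord A).
Proof.
  constructor.
  - apply seq_NoDup.
  - intros a b Ha Hb. apply seq_alternating; [lia|assumption|assumption].
  - intros v e Hve. destruct (in_star_chords _ Hve) as [a [Ha Heq]]. injection Heq as -> ->.
    destruct (star_valid_arrow a Ha) as [A1 [A2 [A3 [A4 _]]]].
    split; [apply in_seq; lia|]. split; [apply in_seq; lia|].
    split; [apply even_double|]. split; [apply even_double_succ|].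
    intro Hadj. destruct (vertex_edge_adjacent m _ _ A1 A2 Hadj); auto.
  - exact star_chords_nodup.
  - exact star_adjacent_no_cross.
  - exact star_fan_free.
Qed.

End StarConfig.

Theorem star_arrow_bound m A : 3 <= m -> is_star m A -> fan_crossing_free m A ->
  length A + 5 <= 2 * m.
Proof.
  intros Hm Hstar Hfcf.
  pose proof (chord_config_bound m _ _ _ (star_config m A Hm Hstar Hfcf) (length_seq (2 * m) 0) Hm)
    as Hbound.
  rewrite length_map in Hbound. exact Hbound.
Qed.

(* For [m = 3] the bound [3m - 8 = 1] is attained by a single arrow from [v_0] through the
   opposite edge [e_1]. *)
Open Scope R_scope.

Lemma vtx3_wrap : vtx 3 3 = vtx 3 0.
Proof.
  unfold vtx. replace (2 * PI * INR 3 / INR 3) with (2 * PI) by (simpl; field).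
  replace (2 * PI * INR 0 / INR 3) with 0 by (simpl; field).
  rewrite cos_2PI, sin_2PI, cos_0, sin_0. reflexivity.
Qed.

Lemma triangle_ccw : 0 < orient (vtx 3 0) (vtx 3 1) (vtx 3 2).
Proof. apply (vorient_pos 3 0 1 2); lia. Qed.

Definition example_arrow : arrow := Arrow 0 1 (1/2).

Lemma triangle_edges_disjoint i j : (i < 3)%nat -> (j < 3)%nat -> i <> j ->
  ~ intersects 3 (EEdge i) (EEdge j).
Proof.
  intros Hi Hj Hij [q [H1 [H2 H3]]]. simpl in H1, H2. apply H3.
  pose proof triangle_ccw as Ho.
  pose proof (orient_cyc (vtx 3 0) (vtx 3 1) (vtx 3 2)) as C1.
  pose proof (orient_cyc (vtx 3 1) (vtx 3 2) (vtx 3 0)) as C2.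
  pose proof (on_seg_orient _ _ _ H1) as O1.
  destruct H2 as [t [Ht ->]]. rewrite orient_lerp_r in O1.
  assert (Hi' : (i = 0 \/ i = 1 \/ i = 2)%nat) by lia.
  assert (Hj' : (j = 0 \/ j = 1 \/ j = 2)%nat) by lia.
  destruct Hi' as [->|[->| ->]]; destruct Hj' as [->|[->| ->]]; try lia; simpl in *;
    rewrite ?vtx3_wrap in *; rewrite ?orient_degenerate_l, ?orient_degenerate_r in O1.
  - assert (t = 0) by nra. subst t. exists 1%nat. rewrite lerp0. repeat split; auto.
  - assert (t = 1) by nra. subst t. exists 0%nat. rewrite lerp1. repeat split; auto.
  - assert (t = 1) by nra. subst t. exists 1%nat. rewrite lerp1. repeat split; auto.
  - assert (t = 0) by nra. subst t. exists 2%nat. rewrite lerp0. repeat split; auto.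
  - assert (t = 0) by nra. subst t. exists 0%nat. rewrite lerp0. repeat split; auto.
  - assert (t = 1) by nra. subst t. exists 2%nat. rewrite lerp1. repeat split; auto.
Qed.

Lemma example_arrow_edges j : (j < 3)%nat -> j <> 1%nat ->
  ~ intersects 3 (EArrow example_arrow) (EEdge j).
Proof.
  intros Hj Hj1 [q [H1 [H2 H3]]]. simpl in H1, H2. apply H3.
  pose proof triangle_ccw as Ho.
  pose proof (orient_cyc (vtx 3 0) (vtx 3 1) (vtx 3 2)) as C1.
  pose proof (orient_cyc (vtx 3 1) (vtx 3 2) (vtx 3 0)) as C2.
  pose proof (on_seg_orient _ _ _ H2) as O1.
  destruct H1 as [s [Hs ->]]. unfold arrow_end, example_arrow in O1; simpl in O1.
  rewrite !orient_lerp_r in O1.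
  assert (Hj' : (j = 0 \/ j = 2)%nat) by lia.
  destruct Hj' as [->| ->]; simpl in *; rewrite ?vtx3_wrap in *;
    rewrite ?orient_degenerate_l, ?orient_degenerate_r in O1;
    assert (s = 0) by nra; subst s; exists 0%nat; rewrite lerp0; repeat split; auto.
Qed.

Lemma example_star : is_star 3 [example_arrow].
Proof.
  split.
  - constructor; [|constructor].
    unfold valid_arrow, example_arrow; simpl. repeat split; try lia; lra.
  - constructor; [simpl; auto|constructor].
Qed.

(* Edges meet only the arrow, and the arrow meets only [e_1]: no element meets two others. *)
Lemma example_fan_crossing_free : fan_crossing_free 3 [example_arrow].
Proof.
  intros x y z k Hx Hy Hz Hxy Hxz Hyz Hk Iy Iz Ixy Ixz.
  assert (Hedge : forall i w, (i < 3)%nat -> elem_in 3 [example_arrow] w -> EEdge i <> w ->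
    intersects 3 (EEdge i) w -> w = EArrow example_arrow).
  { intros i [j|a] Hi Hw Hne I; simpl in Hw.
    - exfalso. apply (triangle_edges_disjoint i j); auto.
    - destruct Hw as [<-|[]]. reflexivity. }
  assert (Harrow : forall w, elem_in 3 [example_arrow] w -> EArrow example_arrow <> w ->
    intersects 3 (EArrow example_arrow) w -> w = EEdge 1).
  { intros [j|a] Hw Hne I; simpl in Hw.
    - destruct (Nat.eq_dec j 1) as [->|Hn]; [reflexivity|].
      exfalso. apply (example_arrow_edges j); auto.
    - destruct Hw as [<-|[]]. contradiction. }
  destruct x as [i|a]; simpl in Hx.
  - apply Hyz. rewrite (Hedge i y), (Hedge i z); auto.
  - destruct Hx as [<-|[]]. apply Hyz. rewrite (Harrow y), (Harrow z); auto.
Qed.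

Close Scope R_scope.

Theorem lemma3 :
  (forall (m : nat) (A : list arrow),
      (3 <= m)%nat -> is_star m A -> fan_crossing_free m A ->
      (length A <= 3 * m - 8)%nat /\
      ((4 <= m)%nat -> (length A <= 3 * m - 9)%nat)) /\
  (exists A : list arrow,
      is_star 3 A /\ fan_crossing_free 3 A /\ length A = (3 * 3 - 8)%nat).
Proof.
  split.
  - (* [|A| <= 2m - 5], which is at most [3m - 8], and at most [3m - 9] once [m >= 4] *)
    intros m A Hm Hstar Hfcf. pose proof (star_arrow_bound m A Hm Hstar Hfcf). lia.
  - exists [example_arrow].
    split; [exact example_star|]. split; [exact example_fan_crossing_free|]. reflexivity.
Qed.
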